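(* Let $k\in\mathbb{N}$ and let $u=a_1\cdots a_n$ be a word over a finite alphabet $A$ with $x$-coordinates $x_1,\dots,x_n$ (where $x_i$ is the minimal length of an X-ranker reaching position $i$ in $u$). Run the following algorithm: initialize $n_a\gets1$ for all $a\in A$; for $i=n,n-1,\dots,1$: let $c=a_i$; if $x_i+n_c\le k+1$, then set $y_i\gets n_c$, $n_c\gets n_c+1$, and for all $a\in A$ set $n_a\gets\min(n_a,n_c)$; otherwise mark position $i$ for deletion. Let $v$ be the word obtained from $u$ by removing all marked positions. Then $u\sim_k v$.
   Context: $u\sim_k v$ iff $u$ and $v$ have the same scattered subwords of length at most $k$ (a word $b_1\cdots b_m$ is a subword of $w$ if $w=w_0b_1w_1\cdots b_mw_m$). An X-ranker is a nonempty word over $\{\mathsf X_a : a\in A\}$, length = word length; for a word $w$, $\mathsf X_a(w)$ is the smallest $a$-position of $w$ and $r\mathsf X_a(w)$ the smallest $a$-position greater than $r(w)$ (possibly undefined). *)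

(* Positions in words are 0-indexed. *)
From mathcomp Require Import all_boot.
Set Implicit Arguments. Unset Strict Implicit. Unset Printing Implicit Defensive.

Section Defs.
Variable A : finType.

Definition simk (k : nat) (u v : seq A) : Prop :=
  forall w : seq A, size w <= k -> subseq w u = subseq w v.

Definition next_pos (u : seq A) (s : nat) (a : A) : option nat :=
  let j := s + find (pred1 a) (drop s u) in
  if j < size u then Some j else None.

(* evaluation of an X-ranker X_{a1} X_{a2} ... X_{am} (given as the word
   [:: a1; ...; am] over A) on u: X_{a1}(u) is the smallest a1-position,
   r X_b (u) is the smallest b-position greater than r(u).  The empty
   word is not an X-ranker and is mapped to None. *)
Definition rk_eval (u : seq A) (r : seq A) : option nat :=
  match r with
  | [::] => None
  | a :: r' => foldl (fun o b => obind (fun p => next_pos u p.+1 b) o)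
                     (next_pos u 0 a) r'
  end.

Definition is_xcoord (u : seq A) (i m : nat) : Prop :=
  (exists2 r : seq A, size r = m & rk_eval u r = Some i) /\
  (forall r : seq A, rk_eval u r = Some i -> m <= size r).

(* The deletion algorithm.  State: counters n_a and the keep-flags of the
   already processed suffix.  foldr processes positions n-1, ..., 0. *)
Definition alg_step (k : nat) (x : nat -> nat) (ci : A * nat)
  (st : (A -> nat) * seq bool) : (A -> nat) * seq bool :=
  let (c, i) := ci in
  let (cnt, ks) := st in
  if x i + cnt c <= k.+1 then
    let nc := (cnt c).+1 in
    (fun a => minn (if a == c then nc else cnt a) nc, true :: ks)
  else (cnt, false :: ks).

Definition keep_flags (k : nat) (u : seq A) (x : nat -> nat) : seq bool :=
  (foldr (alg_step k x) (fun _ => 1, [::]) (zip u (iota 0 (size u)))).2.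

Definition alg_output (k : nat) (u : seq A) (x : nat -> nat) : seq A :=
  mask (keep_flags k u x) u.

End Defs.

(* Deleting a position of letter c from p c s, where s is the part of the
   suffix kept so far, preserves ~_k.  A subword w of p c s that is not a
   subword of p s factors as w1 c w2 with w1 embedded in p but w1 c not; then
   the X-ranker w1 c reaches the deleted position, so |w1| + 1 >= x_i and
   |w2| <= k - x_i.  The counter n_c maintained by the algorithm guarantees
   that c z is a subword of s for every subword z of s with |z| + 2 <= n_c,
   and deletion happens exactly when n_c >= k + 2 - x_i, so c w2 embeds
   into s and w into p s. *)

From mathcomp Require Import all_boot zify.
Set Implicit Arguments. Unset Strict Implicit. Unset Printing Implicit Defensive.

Section Subwords.
Variable A : eqType.
Implicit Types (a b c d : A) (p s w z : seq A).

Lemma subseq_consE a b w s :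
  subseq (a :: w) (b :: s) = if a == b then subseq w s else subseq (a :: w) s.
Proof. by rewrite /=; case: (a == b). Qed.

Lemma subseq_cons_first a p s w :
  a \notin p -> subseq (a :: w) (p ++ a :: s) = subseq w s.
Proof.
elim: p => [|b p IHp]; first by rewrite subseq_consE eqxx.
rewrite inE negb_or => /andP[ab /IHp <-].
by rewrite cat_cons subseq_consE (negbTE ab).
Qed.

Lemma split_first a p :
  a \in p -> exists2 p1, a \notin p1 & exists p2, p = p1 ++ a :: p2.
Proof.
elim: p => // b p IHp; rewrite inE.
have [-> _|ab /IHp [p1 ap1 [p2 ->]]] := eqVneq a b.
  by exists [::] => //; exists p.
by exists (b :: p1); [rewrite inE negb_or ab | exists p2].
Qed.

Lemma subseq_cat_cons_cases c p s w : subseq w (p ++ c :: s) ->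
  subseq w (p ++ s) \/
  exists w1 w2, [/\ w = w1 ++ c :: w2, subseq w1 p,
                    ~~ subseq (rcons w1 c) p & subseq w2 s].
Proof.
elim: p w => [|d p IHp] [|b w] sub_w; try by left; rewrite sub0seq.
  move: sub_w; rewrite cat0s subseq_consE.
  have [-> sub_w|_ sub_w] := eqVneq b c; last by left.
  by right; exists [::], w; split.
move: sub_w; rewrite cat_cons subseq_consE.
have [->|bd] := eqVneq b d => /IHp [sub_w|[w1 [w2 [def_w sub1 nsub1 sub2]]]].
- by left; rewrite cat_cons subseq_consE eqxx.
- right; exists (d :: w1), w2.
  by rewrite def_w rcons_cons !subseq_consE eqxx; split.
- by left; rewrite cat_cons subseq_consE (negbTE bd).
right; exists w1, w2; split=> //.
  exact: subseq_trans sub1 (subseq_cons p d).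
by case: w1 def_w {sub1} nsub1 => [|b1 w1] [<- _]; rewrite /= (negbTE bd).
Qed.

Fixpoint counter s : A -> nat :=
  if s is d :: s' then
    fun a => minn (if a == d then (counter s' d).+1 else counter s' a)
                  (counter s' d).+1
  else fun _ => 1.

Lemma counter_subseq_cons s c z :
  subseq z s -> (size z).+1 < counter s c -> subseq (c :: z) s.
Proof.
elim: s c z => [//|d s IHs] c z.
have drop_d z' : subseq z' (d :: s) -> size z' < counter s d -> subseq z' s.
  case: z' => [_ _|b z']; first exact: sub0seq.
  rewrite subseq_consE; have [-> sub_z lt_z|_ sub_z _] := eqVneq b d => //.
  exact: IHs.
move=> sub_z /=; case: eqVneq => [_|_].
  by rewrite minnn ltnS => /(drop_d _ sub_z).
rewrite leq_min => /andP[lt_c lt_d].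
by apply: IHs lt_c; apply: drop_d.
Qed.

End Subwords.

Section Rankers.
Variables (A : finType) (u : seq A).
Implicit Types (a c : A) (p r t w : seq A).

Definition rk_from (s : nat) r : option nat :=
  if r is a :: r' then
    foldl (fun o b => obind (fun q => next_pos u q.+1 b) o) (next_pos u s a) r'
  else None.

Lemma rk_evalE r : rk_eval u r = rk_from 0 r.
Proof. by case: r. Qed.

Lemma next_pos_first s p a t :
  drop s u = p ++ a :: t -> a \notin p -> next_pos u s a = Some (s + size p).
Proof.
move=> def_u pa; rewrite /next_pos def_u find_cat.
have /negbTE -> : ~~ has (pred1 a) p.
  by apply/hasPn => b bp; apply: contraNneq pa => <-.
have := congr1 size def_u; rewrite size_drop size_cat /= eqxx addn0.
by case: ifPn => //; lia.
Qed.

Lemma rk_from_rcons s p c t w :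
  drop s u = p ++ c :: t -> subseq w p -> ~~ subseq (rcons w c) p ->
  rk_from s (rcons w c) = Some (s + size p).
Proof.
elim: w s p => [|a w IHw] s p def_u sub_w nsub_w.
  by apply: next_pos_first def_u _; rewrite -sub1seq.
have [p1 ap1 [p2 def_p]] := split_first (mem_subseq sub_w (mem_head a w)).
rewrite def_p subseq_cons_first // in sub_w.
rewrite def_p rcons_cons subseq_cons_first // in nsub_w.
have def_u1 : drop s u = p1 ++ a :: p2 ++ c :: t by rewrite def_u def_p -catA.
have def_u2 : drop (s + size p1).+1 u = p2 ++ c :: t.
  have := congr1 (drop (size p1).+1) def_u1.
  rewrite drop_drop -(cat_rcons a) (drop_size_cat _ (size_rcons _ _)).
  by rewrite addSn addnC.
rewrite /= (next_pos_first def_u1 ap1).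
move: (IHw _ _ def_u2 sub_w nsub_w); rewrite headI /= => ->.
by rewrite def_p size_cat /=; congr Some; lia.
Qed.

Lemma simk_delete k p c t s X :
  u = p ++ c :: t ->
  (forall r, rk_eval u r = Some (size p) -> X <= size r) ->
  k.+1 < X + counter s c -> simk k (p ++ c :: s) (p ++ s).
Proof.
move=> def_u minX lt_k w le_w; apply/idP/idP => [sub_w|]; last first.
  by move/subseq_trans; apply; rewrite subseq_cat2l subseq_cons.
have [//|[w1 [w2 [def_w sub1 nsub1 sub2]]]] := subseq_cat_cons_cases sub_w.
have reach : rk_eval u (rcons w1 c) = Some (size p).
  by rewrite rk_evalE (@rk_from_rcons 0 p c t) ?drop0.
have := minX _ reach; rewrite size_rcons => le_X.
rewrite def_w; apply: cat_subseq sub1 (counter_subseq_cons sub2 _).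
by move: le_w; rewrite def_w size_cat /=; lia.
Qed.

End Rankers.

Section Algorithm.
Variables (A : finType) (k : nat) (u : seq A) (x : nat -> nat).
Implicit Types (c : A) (p t : seq A).

Definition run t m :=
  foldr (alg_step k x) (fun _ => 1, [::]) (zip t (iota m (size t))).

Lemma run_cons c t m : run (c :: t) m = alg_step k x (c, m) (run t m.+1).
Proof. by []. Qed.

Lemma run_counter t m : (run t m).1 =1 counter (mask (run t m).2 t).
Proof.
elim: t m => [//|c t IHt] m; rewrite run_cons.
have := IHt m.+1; case: (run t m.+1) => cnt ks /= cntE a.
by rewrite /alg_step; case: ifP => _ /=; rewrite !cntE.
Qed.

Hypothesis x_lower_bound :
  forall i, i < size u -> forall r, rk_eval u r = Some i -> x i <= size r.

Lemma run_simk t p : u = p ++ t -> simk k u (p ++ mask (run t (size p)).2 t).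
Proof.
elim: t p => [|c t IHt] p def_u; first by rewrite def_u => w.
have := IHt (rcons p c); rewrite cat_rcons size_rcons => /(_ def_u) sim_u.
rewrite run_cons; have := run_counter t (size p).+1.
case: (run t (size p).+1) sim_u => cnt ks /= sim_u cntE.
rewrite /alg_step; case: ifP => [_|/negbT]; first by rewrite /= -cat_rcons.
rewrite -ltnNge cntE /= => lt_k w le_w.
have lt_p : size p < size u by rewrite def_u size_cat /= addnS ltnS leq_addr.
by rewrite sim_u // cat_rcons (simk_delete def_u (x_lower_bound lt_p) lt_k).
Qed.

End Algorithm.

Theorem lemma16 (A : finType) (k : nat) (u : seq A) (x : nat -> nat) :
  (forall i, i < size u -> is_xcoord u i (x i)) ->
  simk k u (alg_output k u x).
Proof.
move=> xP; exact: (@run_simk _ k u x (fun i lt_i => (xP i lt_i).2) u [::]).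
Qed.
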